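(* For all $l\in\mathbb{N}$ the coefficients of the expansion in the context satisfy $$\tilde c_{4l-3,\,1-2l}=0,\qquad \tilde c_{4l-1,\,-2l}=\Big(-\frac14\Big)^{l-1}l\,\tilde c_{3,-2}^{\,l}=-\frac{l\,b^{2l}(a^2+1)^l}{4^{2l-1}}.$$ Equivalently, $\sum_{n\ge0}\tilde c_{2n-1,-n}x^n=\dfrac{Cx^2}{(1+Cx^2/4)^2}$ with $C=\tilde c_{3,-2}=-b^2(a^2+1)/4$.
   Context: Consider the degenerate third Painlevé equation with $\varepsilon=+1$: $u''=\frac{(u')^2}{u}-\frac{u'}{\tau}+\frac{1}{\tau}(-8u^2+2ab)+\frac{b^2}{u}$, where $b\in\mathbb{R}\setminus\{0\}$, $a\in\mathbb{C}$. It has a one-parameter family of solutions, defined for $|\arg\tau|<\pi$ with the principal branch of $\ln$, admitting the expansion (convergent near $\tau=0$) $$u(\tau)=\sum_{k=0}^{\infty}\tau^{2k-1}\sum_{m=-2\lfloor k/2\rfloor}^{\infty}\tilde c_{2k-1,m}(\ln\tau)^{-m},\qquad \tilde c_{-1,0}=\tilde c_{-1,1}=0,\ \tilde c_{-1,2}=-\tfrac14,$$ where $\tilde c_{-1,3}\in\mathbb{C}$ is a free parameter and all other coefficients $\tilde c_{2k-1,m}$ are uniquely determined by $\tilde c_{-1,3}$, $a$, $b$ by substituting the expansion into the equation (coefficients with $m<-2\lfloor k/2\rfloor$ are zero). *)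

From HB Require Import structures.
From mathcomp Require Import all_boot all_order all_algebra.
From mathcomp Require Import complex.
From mathcomp Require Import reals.
Set Implicit Arguments. Unset Strict Implicit. Unset Printing Implicit Defensive.
Import Order.TTheory GRing.Theory Num.Theory.
Local Open Scope ring_scope.

(* A family  c : nat -> int -> R[i]  with  c k m = \tilde c_{2k-1, m}.
   Writing X = tau^2 ln(tau), Y = (ln tau)^{-1}, one has
     tau^{2k-1} (ln tau)^{-m} = tau^{-1} X^k Y^(m+k),
   so u = tau^{-1} F(X,Y) with F the formal double power series whose
   coefficient of X^k Y^j is  c k (j - k)  (this uses that the support
   condition m >= -2 floor(k/2) implies m + k >= 0). *)
Section Expansion.
Variable R : realType.
Local Notation C := R[i].

Definition coefF (c : nat -> int -> C) (k j : nat) : C := c k (j%:Z - k%:Z).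

Definition pmul (f g : nat -> nat -> C) (k j : nat) : C :=
  \sum_(k1 < k.+1) \sum_(j1 < j.+1) f k1 j1 * g (k - k1)%N (j - j1)%N.

(* If v = tau^{-1} G(X,Y) then (tau d/dtau) v = tau^{-1} (Dop G)(X,Y):
   tau d/dtau (tau^{2k-1} L^(k-j)) = (2k-1) tau^{2k-1} L^(k-j) + (k-j) tau^{2k-1} L^(k-j-1). *)
Definition Dop (f : nat -> nat -> C) (k j : nat) : C :=
  ((2 * k)%:R - 1) * f k j +
  (if j is j'.+1 then (k%:Z - j'%:Z)%:~R * f k j' else 0).

(* multiplication by tau^2 = X Y *)
Definition shiftXY (f : nat -> nat -> C) (k j : nat) : C :=
  match k, j with k'.+1, j'.+1 => f k' j' | _, _ => 0 end.

(* The degenerate PIII (eps = +1)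
     u'' = u'^2/u - u'/tau + (-8u^2 + 2ab)/tau + b^2/u
   multiplied by tau^2 u and written with theta = tau d/dtau reads
     u theta^2 u - (theta u)^2 + 8 tau u^3 - 2ab tau u - b^2 tau^2 = 0;
   substituting u = tau^{-1} F and multiplying by tau^2:
     F Dop^2 F - (Dop F)^2 + 8 F^3 - 2ab XY F - b^2 X^2 Y^2 = 0.
   [solves_PIII a b c] states that the formal expansion with coefficients c
   satisfies this identity coefficientwise. *)
Definition solves_PIII (a : C) (b : R) (c : nat -> int -> C) : Prop :=
  let F := coefF c in
  forall k j : nat,
    pmul F (Dop (Dop F)) k j - pmul (Dop F) (Dop F) k j
    + 8 * pmul F (pmul F F) k j
    - 2 * a * (b%:C)%C * shiftXY F k j
    - ((b%:C)%C) ^+ 2 * (if (k == 2)%N && (j == 2)%N then 1 else 0) = 0.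

Definition expansion_shape (c : nat -> int -> C) : Prop :=
  (forall (k : nat) (m : int), m < - (2 * (k %/ 2)%N)%:Z -> c k m = 0)
  /\ c 0%N 0 = 0 /\ c 0%N 1 = 0 /\ c 0%N 2 = - 4^-1.

End Expansion.

(* Only row 0 of the expansion matters: s_k := \tilde c_{2k-1,-k}, the coefficient of
   X^k Y^0 in F.  At Y = 0 the equation for F becomes s θ²s - (θs)² + 8 s³ = 0 with
   θ = 2X d/dX - 1, whose X^(n+2) coefficient contains s_n only linearly, with factor
   (2n - 4)² s_2.  So for s_2 != 0 the row is determined by s_0 = s_1 = 0 and s_2, and it is
   the coefficient sequence of C X²/(1 + C X²/4)² with C = s_2; that this series solves the
   equation is checked coefficientwise by telescoping.  The (1,3) and (2,2) equations give
   s_2 = -b²(a² + 1)/4; if this vanishes, the (m+1,1) equations force the row to vanish.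
   The claim \tilde c_{4l-3,1-2l} = 0 is just the support condition. *)

From HB Require Import structures.
From mathcomp Require Import all_boot all_order all_algebra.
From mathcomp Require Import complex reals ring zify.

Set Implicit Arguments.
Unset Strict Implicit.
Unset Printing Implicit Defensive.

Import Order.TTheory GRing.Theory Num.Theory.
Local Open Scope ring_scope.

Lemma sum_ord_even (V : zmodType) (phi : nat -> V) m :
  (forall p, odd p -> phi p = 0) ->
  \sum_(p < (2 * m).+1) phi p = \sum_(i < m.+1) phi (2 * i)%N.
Proof.
move=> phi_odd; elim: m => [|m IHm]; first by rewrite !big_ord1.
rewrite (_ : (2 * m.+1).+1 = (2 * m).+3) ?mulnS //.
rewrite big_ord_recr big_ord_recr /= IHm [RHS]big_ord_recr /= phi_odd ?addr0 ?mulnS //.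
by rewrite /= oddM.
Qed.

Lemma sum_id_mul_complement (F : numFieldType) m :
  \sum_(0 <= j < m.+1) (j%:R * (m - j)%:R : F) = (m%:R ^+ 3 - m%:R) / 6.
Proof.
pose V (x : F) := m%:R * x * (x - 1) / 2 - (x - 1) * x * (2 * x - 1) / 6.
rewrite (telescope_sumr_eq (fun j => V j%:R)) // => [|j /andP [_ lt_jm]].
  by rewrite /V -natr1; field.
by rewrite (natrB _ (ltnSE lt_jm)) -natr1 /V; field.
Qed.

Lemma sum_ord_eq1 (V : zmodType) K m (x : V) :
  \sum_(i < K) (if i == m :> nat then x else 0) = if (m < K)%N then x else 0.
Proof. by rewrite -(@big_ord1_eq _ _ +%R (fun _ => x)) [RHS]big_mkcond. Qed.

Section RowZero.
Variable F : numFieldType.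
Implicit Types (s t : nat -> F) (w x : F).

(* On row 0, [Dop] multiplies the [n]-th coefficient by the exponent [2 n - 1] of τ. *)
Definition texp (n : nat) : F := (2 * n)%:R - 1.

Definition row0_term s k p : F :=
  s p * (texp (k - p) * (texp (k - p) * s (k - p)%N))
  - texp p * s p * (texp (k - p) * s (k - p)%N)
  + 8 * (s p * \sum_(q < (k - p).+1) s q * s (k - p - q)%N).

Definition row0_residual s k : F := \sum_(p < k.+1) row0_term s k p.

(* The coefficients of [-4 w X² / (1 - w X²)²], i.e. of [C X² / (1 + C X² / 4)²] for [C = -4 w]. *)
Definition row0_sol w m : F := if odd m then 0 else -4 * (m./2)%:R * w ^+ m./2.

Lemma row0_sol_double w i : row0_sol w (2 * i) = -4 * i%:R * w ^+ i.
Proof. by rewrite /row0_sol mul2n odd_double doubleK. Qed.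

Lemma row0_sol_odd w m : odd m -> row0_sol w m = 0.
Proof. by rewrite /row0_sol => ->. Qed.

Lemma row0_sol0 m : row0_sol 0 m = 0.
Proof.
rewrite /row0_sol; case: (odd m) => //.
by case: (m./2) => [|i]; rewrite ?mulr0 ?mul0r // expr0n mulr0.
Qed.

Lemma row0_sol_quarter x l : (0 < l)%N ->
  row0_sol (- x / 4) (2 * l) = (- 4^-1) ^+ (l - 1) * l%:R * x ^+ l.
Proof.
case: l => // l _; rewrite row0_sol_double subSS subn0.
by rewrite (_ : - x / 4 = - 4^-1 * x) ?exprMn ?exprS; field.
Qed.

Lemma neg_quarter_powE y l : (0 < l)%N ->
  (- 4^-1) ^+ (l - 1) * l%:R * (- 4^-1 * y) ^+ l = - (l%:R * y ^+ l) / 4 ^+ (2 * l - 1) :> F.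
Proof.
case: l => // l _; rewrite subSS subn0 (_ : (2 * l.+1 - 1 = (2 * l).+1)%N); last by lia.
have -> : (4 : F) ^+ (2 * l).+1 = 4 * ((- 4^-1) ^+ l * (- 4^-1) ^+ l)^-1.
  by rewrite exprS -exprMn mulrNN -expr2 !exprVn invrK exprM.
rewrite exprS exprMn exprS; field.
by rewrite expf_neq0 // oppr_eq0 invr_eq0 pnatr_eq0.
Qed.

Lemma row0_sol_conv w m :
  \sum_(q < (2 * m).+1) row0_sol w q * row0_sol w (2 * m - q)%N
  = 16 * w ^+ m * ((m%:R ^+ 3 - m%:R) / 6).
Proof.
rewrite (sum_ord_even (phi := fun q => row0_sol w q * row0_sol w (2 * m - q)%N)).
  2: by move=> q /row0_sol_odd ->; rewrite mul0r.
rewrite -sum_id_mul_complement big_mkord mulr_sumr; apply: eq_bigr => j _.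
have le_jm : (j <= m)%N by rewrite -ltnS.
have -> : w ^+ m = w ^+ j * w ^+ (m - j) by rewrite -exprD subnKC.
by rewrite -mulnBr !row0_sol_double; ring.
Qed.

Lemma row0_residual_sol w n : row0_residual (row0_sol w) (2 * n) = 0.
Proof.
(* [U n%:R i%:R] is an antidifference in [i] of the [(2 * i)]-th term divided by [w ^+ n]. *)
pose U (n x : F) :=
  -256/3 * x^+5 + 256 * n * x^+4 + 544/3 * x^+4 - 256 * n^+2 * x^+3 - 448 * n * x^+3
  - 320/3 * x^+3 + 256/3 * n^+3 * x^+2 + 352 * n^+2 * x^+2 + 608/3 * n * x^+2
  + 32/3 * x^+2 - 32/3 * n * x - 96 * n^+2 * x - 256/3 * n^+3 * x.
rewrite /row0_residual (sum_ord_even (phi := row0_term (row0_sol w) (2 * n))); last first.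
  by move=> p odd_p; rewrite /row0_term row0_sol_odd //; ring.
rewrite (eq_bigr (fun i : 'I_n.+1 => w ^+ n * (U n%:R i.+1%:R - U n%:R i%:R))).
  rewrite -mulr_sumr -(big_mkord xpredT (fun i => U n%:R i.+1%:R - U n%:R i%:R)).
  by rewrite telescope_sumr // /U -natr1; field.
move=> i _; have le_in : (i <= n)%N by rewrite -ltnS.
rewrite /row0_term -!mulnBr !row0_sol_double row0_sol_conv.
have -> : w ^+ n = w ^+ i * w ^+ (n - i) by rewrite -exprD subnKC.
by rewrite /texp /U !natrM (natrB _ le_in) -natr1; field.
Qed.

Lemma row0_residual_top s t n : (2 < n)%N ->
  (forall m, (m < n)%N -> s m = t m) -> (forall m, (m < 2)%N -> t m = 0) ->
  row0_residual s n.+2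
  = row0_residual t n.+2 + (texp n - texp 2) ^+ 2 * s 2%N * (s n - t n).
Proof.
move=> lt2n eq_st t_small.
have s_small m : (m < 2)%N -> s m = 0 by move=> lt_m2; rewrite eq_st ?t_small //; lia.
have cubic_eq (p : 'I_n.+3) :
    s p * \sum_(q < (n.+2 - p).+1) s q * s (n.+2 - p - q)%N
    = t p * \sum_(q < (n.+2 - p).+1) t q * t (n.+2 - p - q)%N.
  rewrite !mulr_sumr; apply: eq_bigr => q _.
  have lt_pn := ltn_ord p; have lt_qn := ltn_ord q.
  have [lt_p2|le2p] := ltnP p 2; first by rewrite (s_small p) ?(t_small p) // !mul0r.
  have [lt_q2|le2q] := ltnP q 2; first by rewrite (s_small q) ?(t_small q) // !(mul0r, mulr0).
  have [lt_r2|le2r] := ltnP (n.+2 - p - q) 2.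
    by rewrite (s_small (n.+2 - p - q)%N) ?(t_small (n.+2 - p - q)%N) // !mulr0.
  by rewrite !eq_st //; lia.
rewrite /row0_residual (eq_bigr (fun p : 'I_n.+3 => row0_term t n.+2 p
  + (if p == 2%N :> nat then (texp n ^+ 2 - texp 2 * texp n) * s 2%N * (s n - t n) else 0)
  + (if p == n :> nat then (texp 2 ^+ 2 - texp n * texp 2) * s 2%N * (s n - t n) else 0))).
  have [lt2n3 ltnn3] : (2 < n.+3)%N /\ (n < n.+3)%N by lia.
  by rewrite big_split big_split /= !sum_ord_eq1 lt2n3 ltnn3; ring.
move=> p _; have lt_pn := ltn_ord p.
rewrite /row0_term cubic_eq.
have [->|ne_p2] := eqVneq (p : nat) 2%N.
  have -> : (n.+2 - 2 = n)%N by lia.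
  by rewrite (ltn_eqF lt2n) -(eq_st 2%N) //; ring.
have [->|ne_pn] := eqVneq (p : nat) n.
  have -> : (n.+2 - n = 2)%N by lia.
  by rewrite -(eq_st 2%N) //; ring.
rewrite !addr0.
have [lt_p2|le2p] := ltnP p 2; first by rewrite (s_small p) ?(t_small p) //; ring.
have [lt_pn'|lenp] := ltnP p n.
  by rewrite (eq_st p) // (eq_st (n.+2 - p)%N) //; lia.
by rewrite (s_small (n.+2 - p)%N) ?(t_small (n.+2 - p)%N); [ring | lia | lia].
Qed.

(* The top coefficient [s n] enters the order-[n.+2] equation linearly, with factor
   [(texp n - texp 2) ^+ 2 * s 2 = (2 * n - 4) ^+ 2 * s 2]: so [s 2 != 0] determines [s]. *)
Lemma row0_residual_uniq s : (forall k, row0_residual s k = 0) ->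
  s 0%N = 0 -> (forall m, odd m -> s m = 0) -> s 2%N != 0 ->
  forall m, s m = row0_sol (- s 2%N / 4) m.
Proof.
move=> res0 s0 s_odd s2_neq0; set w := - s 2%N / 4.
have sol_small m : (m < 2)%N -> row0_sol w m = 0.
  by case: m => [|[|m]] // _; rewrite /row0_sol /=; ring.
elim/ltn_ind => n IHn.
have [odd_n|even_n] := boolP (odd n); first by rewrite s_odd ?row0_sol_odd.
have [le_n2|lt2n] := leqP n 2.
  move: even_n le_n2; case: n IHn => [|[|[|n]]] // _ _ _; first by rewrite s0 sol_small.
  by rewrite (row0_sol_double w 1) /w; field.
have := row0_residual_top lt2n IHn sol_small.
have -> : n.+2 = (2 * (n./2).+1)%N.
  by rewrite -[in LHS](odd_double_half n) (negbTE even_n) add0n mul2n doubleS.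
rewrite res0 row0_residual_sol add0r => /esym /eqP.
rewrite !mulf_eq0 (negbTE s2_neq0) orbF orbb !subr_eq0 => /orP [/eqP|/eqP //].
by rewrite /texp => /addIr /eqP; rewrite eqr_nat; lia.
Qed.
End RowZero.

Arguments texp {F} n.

Section Residual.
Variable R : realType.
Local Notation C := R[i].
Implicit Types (f u v : nat -> nat -> C) (a : C) (b : R).

Definition residual a b f k j : C :=
  pmul f (Dop (Dop f)) k j - pmul (Dop f) (Dop f) k j
  + 8 * pmul f (pmul f f) k j
  - 2 * a * (b%:C)%C * shiftXY f k j
  - ((b%:C)%C) ^+ 2 * (if (k == 2)%N && (j == 2)%N then 1 else 0).

Lemma solves_PIII_residual a b c :
  solves_PIII a b c -> forall k j, residual a b (coefF c) k j = 0.
Proof. by move=> sol k j; apply: sol. Qed.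

Lemma pmul_row0 u v k : pmul u v k 0 = \sum_(p < k.+1) u p 0%N * v (k - p)%N 0%N.
Proof. by apply: eq_bigr => p _; rewrite big_ord1. Qed.

Lemma pmul_row1 u v k : pmul u v k 1 =
  \sum_(p < k.+1) (u p 0%N * v (k - p)%N 1%N + u p 1%N * v (k - p)%N 0%N).
Proof. by apply: eq_bigr => p _; rewrite big_ord_recr big_ord1. Qed.

Lemma Dop_row0 u k : Dop u k 0 = texp k * u k 0%N.
Proof. by rewrite /Dop addr0. Qed.

Lemma DopS u k j : Dop u k j.+1 = texp k * u k j.+1 + (k%:R - j%:R) * u k j.
Proof. by rewrite /Dop intrB. Qed.

Lemma residual_row0 a b f k : residual a b f k 0 = row0_residual (fun p => f p 0%N) k.
Proof.
rewrite /residual /row0_residual andbF mulr0 subr0.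
have -> : shiftXY f k 0 = 0 by case: k.
rewrite mulr0 subr0 !pmul_row0 mulr_sumr -sumrB -big_split /=.
by apply: eq_bigr => p _; rewrite /row0_term !Dop_row0 pmul_row0.
Qed.

Lemma pmul_row0_low u v m k :
  (forall p, (p < m)%N -> u p 0%N = 0) -> (forall p, (p < m)%N -> v p 0%N = 0) ->
  (k < 2 * m)%N -> pmul u v k 0 = 0.
Proof.
move=> u_low v_low lt_k2m; rewrite pmul_row0; apply: big1 => q _.
have [lt_qm|le_mq] := ltnP q m; first by rewrite u_low ?mul0r.
by rewrite v_low ?mulr0 //; lia.
Qed.

Lemma pmul_row1_low u v m : (1 < m)%N ->
  (forall p, (p < m)%N -> u p 0%N = 0) -> (forall p, (p < m)%N -> v p 0%N = 0) ->
  u 0%N 1%N = 0 -> v 0%N 1%N = 0 ->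
  pmul u v m.+1 1 = u m 0%N * v 1%N 1%N + u 1%N 1%N * v m 0%N.
Proof.
move=> lt1m u_low v_low u01 v01.
rewrite pmul_row1 (eq_bigr (fun p : 'I_m.+2 =>
  (if p == m :> nat then u m 0%N * v 1%N 1%N else 0)
  + (if p == 1%N :> nat then u 1%N 1%N * v m 0%N else 0))).
  have [ltm ltm1] : (m < m.+2)%N /\ (1 < m.+2)%N by lia.
  by rewrite big_split /= !sum_ord_eq1 ltm ltm1.
move=> p _; have lt_pm := ltn_ord p.
have [->|ne_pm] := eqVneq (p : nat) m.
  have -> : (m.+1 - m = 1)%N by lia.
  by rewrite (gtn_eqF lt1m) (v_low 1%N) // mulr0 !addr0.
have [->|ne_p1] := eqVneq (p : nat) 1%N.
  by rewrite subSS subn0 u_low // mul0r !add0r.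
rewrite addr0.
have [->|p_gt0] := posnP p; first by rewrite (u_low 0%N) ?u01 ?mul0r ?addr0 //; lia.
have [lt_pm'|le_mp] := ltnP p m.
  by rewrite u_low // (v_low (m.+1 - p)%N) ?mul0r ?mulr0 ?addr0 //; lia.
have -> : (p : nat) = m.+1 by lia.
by rewrite subnn v01 (v_low 0%N) ?mulr0 ?addr0 //; lia.
Qed.

Lemma real_complex_neq0 b : b != 0 -> (b%:C)%C != 0 :> C.
Proof. by apply: contra => /eqP [] ->. Qed.

Lemma residual_row1 a b f m : (2 < m)%N ->
  (forall p, (p < m)%N -> f p 0%N = 0) -> f 0%N 1%N = 0 ->
  residual a b f m.+1 1 = f m 0%N * (f 1%N 1%N * (texp m - 1) ^+ 2 - 2 * a * (b%:C)%C).
Proof.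
move=> lt2m f_low f01; have lt1m : (1 < m)%N by lia.
have f00 : f 0%N 0%N = 0 by apply: f_low; lia.
have f10 : f 1%N 0%N = 0 by apply: f_low.
have Dop_low u : (forall p, (p < m)%N -> u p 0%N = 0) ->
    forall p, (p < m)%N -> Dop u p 0%N = 0.
  by move=> u_low p lt_pm; rewrite Dop_row0 u_low ?mulr0.
have Dop01 u : u 0%N 1%N = 0 -> Dop u 0%N 1%N = 0 by move=> u01; rewrite DopS u01; ring.
have Dop11 u : u 1%N 0%N = 0 -> Dop u 1%N 1%N = u 1%N 1%N.
  by move=> u10; rewrite DopS u10 /texp; ring.
have ff_low p : (p < m.+1)%N -> pmul f f p 0 = 0.
  by move=> lt_pm; apply: (pmul_row0_low f_low f_low); lia.
have ff01 : pmul f f 0 1 = 0 by rewrite pmul_row1 big_ord1 f00 f01; ring.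
have ff11 : pmul f f 1 1 = 0.
  by rewrite pmul_row1 big_ord_recr big_ord1 /= f00 f01 f10; ring.
rewrite /residual (pmul_row1_low lt1m f_low (Dop_low _ (Dop_low _ f_low)) f01
  (Dop01 _ (Dop01 _ f01))).
rewrite (pmul_row1_low lt1m (Dop_low _ f_low) (Dop_low _ f_low) (Dop01 _ f01) (Dop01 _ f01)).
rewrite (pmul_row1_low lt1m f_low (fun p lt_pm => ff_low p (ltnW lt_pm)) f01 ff01).
rewrite !Dop11 ?Dop_row0 ?f10 ?mulr0 // ff11 ff_low // andbF /=.
by rewrite /texp; ring.
Qed.

(* In the degenerate case [a ^+ 2 = -1] row 0 is not determined by its own equations; the
   coefficient of [f m 0] in the [(m.+1, 1)] equation is [2 a b m (m - 2) != 0] instead. *)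
Lemma residual_row0_degenerate a b f : a != 0 -> b != 0 ->
  (forall k j, residual a b f k j = 0) ->
  (forall p, (p <= 2)%N -> f p 0%N = 0) -> f 0%N 1%N = 0 ->
  f 1%N 1%N = a * (b%:C)%C / 2 ->
  forall m, f m 0%N = 0.
Proof.
move=> a_neq0 b_neq0 res f_small f01 f11.
have bC_neq0 := real_complex_neq0 b_neq0.
elim/ltn_ind => m IHm.
have [le_m2|lt2m] := leqP m 2; first exact: f_small.
move: (res m.+1 1%N); rewrite (residual_row1 _ _ lt2m IHm f01) f11.
have -> : a * (b%:C)%C / 2 * (texp m - 1) ^+ 2 - 2 * a * (b%:C)%C
    = 2 * a * (b%:C)%C * (m * (m - 2))%:R.
  by rewrite natrM natrB 1?ltnW // /texp; field.
move/eqP; rewrite mulf_eq0 => /orP [/eqP //|].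
by rewrite !mulf_eq0 (negbTE a_neq0) (negbTE bC_neq0) !pnatr_eq0 muln_eq0; lia.
Qed.

Lemma residual_initial a b f : (forall k j, residual a b f k j = 0) ->
  f 0%N 0%N = 0 -> f 0%N 1%N = 0 -> f 1%N 0%N = 0 -> f 0%N 2%N = - 4^-1 ->
  f 1%N 1%N = a * (b%:C)%C / 2
  /\ f 2%N 0%N = - 4^-1 * ((b%:C)%C ^+ 2 * (a ^+ 2 + 1)).
Proof.
move=> res f00 f01 f10 f02.
have res13 : residual a b f 1 3 = a * (b%:C)%C / 2 - f 1%N 1%N.
  rewrite /residual /pmul /shiftXY !big_ord_recr !big_ord0 /=.
  by rewrite ?subSS ?subn0 ?subnn ?sub0n !DopS !Dop_row0 /= f00 f01 f10 f02 /texp; field.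
have f11 : f 1%N 1%N = a * (b%:C)%C / 2 by apply/eqP; rewrite eq_sym -subr_eq0 -res13 res.
have res22 : residual a b f 2 2
    = - 2 * a * (b%:C)%C * f 1%N 1%N - (b%:C)%C ^+ 2 - 4 * f 2%N 0%N.
  rewrite /residual /pmul /shiftXY !big_ord_recr !big_ord0 /=.
  by rewrite ?subSS ?subn0 ?subnn ?sub0n !DopS !Dop_row0 /= f00 f01 f10 f02 /texp; field.
split=> //; move: (res 2%N 2%N); rewrite res22 f11 => /eqP; rewrite subr_eq0 => /eqP f20.
by apply: (mulfI (_ : (4 : C) != 0)); rewrite ?pnatr_eq0 // -f20; field.
Qed.

Lemma residual_row0_closed_form a b f : b != 0 -> (forall k j, residual a b f k j = 0) ->
  f 0%N 0%N = 0 -> f 0%N 1%N = 0 -> f 0%N 2%N = - 4^-1 ->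
  (forall m, odd m -> f m 0%N = 0) ->
  forall m, f m 0%N = row0_sol (- f 2%N 0%N / 4) m.
Proof.
move=> b_neq0 res f00 f01 f02 f_odd.
have [f11 f20] := residual_initial res f00 f01 (f_odd 1%N isT) f02.
have [f20_eq0|f20_neq0] := eqVneq (f 2%N 0%N) 0; last first.
  apply: row0_residual_uniq => // k.
  by rewrite -(residual_row0 a b); apply: res.
have a_neq0 : a != 0.
  apply/eqP => a_eq0; move: f20_eq0; rewrite f20 a_eq0 expr0n /= add0r mulr1 => /eqP.
  by rewrite mulf_eq0 oppr_eq0 invr_eq0 pnatr_eq0 expf_eq0 /= (negbTE (real_complex_neq0 b_neq0)).
move=> m; rewrite f20_eq0 oppr0 mul0r row0_sol0.
apply: (residual_row0_degenerate a_neq0 b_neq0 res _ f01 f11).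
by case=> [|[|[|]]] // _; rewrite ?f00 ?f_odd.
Qed.
End Residual.

Theorem mainTheorem4 (R : realType) (a : R[i]) (b : R) (c : nat -> int -> R[i]) :
  b != 0 ->
  expansion_shape c ->
  solves_PIII a b c ->
  forall l : nat, (0 < l)%N ->
    c (2 * l - 1)%N (1 - 2 * l%:Z) = 0 /\
    c (2 * l)%N (- (2 * l%:Z)) = (- 4^-1) ^+ (l - 1) * l%:R * (c 2%N (-2)) ^+ l /\
    c (2 * l)%N (- (2 * l%:Z))
      = - (l%:R * ((b%:C)%C) ^+ (2 * l) * (a ^+ 2 + 1) ^+ l) / 4 ^+ (2 * l - 1).
Proof.
move=> b_neq0 [c_low [c00 [c01 c02]]] /solves_PIII_residual res l l_gt0.
have row0_odd k : odd k -> coefF c k 0 = 0.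
  move=> odd_k; apply: c_low; rewrite divn2.
  by have := odd_double_half k; rewrite odd_k -mul2n; lia.
have F00 : coefF c 0 0 = 0 by rewrite /coefF subrr.
have F01 : coefF c 0 1 = 0 by rewrite /coefF subr0.
have F02 : coefF c 0 2 = - 4^-1 by rewrite /coefF subr0.
have row0E := residual_row0_closed_form b_neq0 res F00 F01 F02 row0_odd.
have [_ c2E] := residual_initial res F00 F01 (row0_odd 1%N isT) F02.
have c2_row0 : c 2%N (-2) = coefF c 2 0 by [].
have c2l_row0 : c (2 * l)%N (- (2 * l%:Z)) = coefF c (2 * l) 0.
  by rewrite /coefF sub0r PoszM.
have c2lE : c (2 * l)%N (- (2 * l%:Z)) = (- 4^-1) ^+ (l - 1) * l%:R * (c 2%N (-2)) ^+ l.
  by rewrite c2l_row0 row0E c2_row0 row0_sol_quarter.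
split; last split=> //.
  apply: c_low; have -> : (2 * l - 1 = (l - 1) * 2 + 1)%N by lia.
  by rewrite divnMDl // divn_small // addn0; lia.
by rewrite c2lE c2_row0 c2E neg_quarter_powE // exprMn -exprM mulrA.
Qed.
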